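(* Let $n\ge 2$ and let $f(x)=\sum_{i=0}^n a_i x^i$ be a polynomial with complex coefficients and $a_n\neq 0$. Write $f(x)=a_n(x+x_1)(x+x_2)\cdots(x+x_n)$ with $x_1,\dots,x_n\in\mathbb{C}$, taken in any order. Define the characteristic roots $b_1,\dots,b_{n-1}$ by the relations $x_i=x_{i-1}+\sum_{j=1}^{i-1}b_j$ for $i=2,\dots,n$. Let $B_n=(b_1,\dots,b_{n-1})^T$, and let $H_n=(h_{ij})_{1\le i,j\le n-1}$ be the symmetric matrix whose entries for $i\ge j$ are $$h_{ij}=\frac{1}{6}\Big(ni^3-\tfrac{3}{2}n(n+1)i^2+\tfrac{1}{2}n(3n+1)i+\tfrac{1}{2}(n^4-n^2)\Big)-\frac{1}{4}\big(i^2-(2n+1)i+n(n+1)\big)(j-1)j,$$ and $h_{ij}=h_{ji}$ for $i<j$. Then the characteristic discriminant $D_n=(n-1)!^2a_{n-1}^2-2\,n!\,(n-2)!\,a_na_{n-2}$ satisfies $$D_n=(n-1)!\,(n-2)!\,a_n^2\,B_n^TH_nB_n,$$ equivalently $B_n^TH_nB_n=\dfrac{1}{a_n^2}\big((n-1)a_{n-1}^2-2na_na_{n-2}\big)$. In particular, $H_n$ has constant positive integer entries depending only on $n$.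
   Context: The numbers $-x_1,\dots,-x_n$ are the roots of $f$ listed with multiplicity. The defining relations are equivalent to $b_1=x_2-x_1$ and $b_j=x_{j+1}-2x_j+x_{j-1}$ for $2\le j\le n-1$. For $n=2$ the matrix $H_2=[1]$. *)

From HB Require Import structures.
From mathcomp Require Import all_boot all_order all_algebra.
From mathcomp Require Import complex.
From mathcomp Require Import reals.
Set Implicit Arguments. Unset Strict Implicit. Unset Printing Implicit Defensive.
Import Order.TTheory GRing.Theory Num.Theory.
Local Open Scope ring_scope.

(* Entry h_{ij} of H_n for 1-based indices i >= j, as a rational number. *)
Definition h_low (n i j : nat) : rat :=
  let N := n%:R : rat in let I := i%:R : rat in let J := j%:R : rat in
  (1/6) * (N * I ^+ 3 - (3/2) * N * (N + 1) * I ^+ 2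
           + (1/2) * N * (3 * N + 1) * I + (1/2) * (N ^+ 4 - N ^+ 2))
  - (1/4) * (I ^+ 2 - (2 * N + 1) * I + N * (N + 1)) * (J - 1) * J.

Definition h_entry (n i j : nat) : rat :=
  if (j <= i)%N then h_low n i j else h_low n j i.

Definition Hmx (n : nat) : 'M[rat]_(n.-1) :=
  \matrix_(i < n.-1, j < n.-1) h_entry n i.+1 j.+1.

Definition Bvec (C : Type) (n : nat) (b : nat -> C) : 'cV[C]_(n.-1) :=
  \col_(i < n.-1) b i.+1.

From HB Require Import structures.
From mathcomp Require Import all_boot all_order all_algebra.
From mathcomp Require Import complex.
From mathcomp Require Import reals.
From mathcomp Require Import ring zify.
Set Implicit Arguments. Unset Strict Implicit. Unset Printing Implicit Defensive.
Import Order.TTheory GRing.Theory Num.Theory.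
Local Open Scope ring_scope.

(* Unwinding the recursion gives x_(k+1) = x_1 + sum_i (k - i)_+ b_(i+1), and
   h_(i+1)(j+1) = n sum_k (k-i)_+ (k-j)_+ - (sum_k (k-i)_+) (sum_k (k-j)_+) with k
   ranging over 0..n-1, i.e. H_n is n^2 times the covariance matrix of the ramp
   vectors ((k - i)_+)_k.  Hence B^T H B = n sum_k x_k^2 - (sum_k x_k)^2, which
   does not see the shift x_1 and equals (n - 1) e_1^2 - 2 n e_2 in the
   elementary symmetric functions of the x_k; Vieta turns this into the
   discriminant.  Lagrange's identity
   n sum u v - sum u sum v = sum_(k<l) (u_l - u_k)(v_l - v_k) writes each entry
   of H_n as a sum of products of nondecreasing ramp increments, which are
   natural numbers; the term (l, k) = (n-1, n-2) equals 1. *)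

Section Covariance.
Variable R : comNzRingType.
Implicit Types (u v : nat -> R) (N : nat).

Definition cov N u v : R :=
  N%:R * \sum_(k < N) u k * v k - (\sum_(k < N) u k) * (\sum_(k < N) v k).

Lemma eq_cov N (u u' v v' : nat -> R) :
  (forall k, (k < N)%N -> u k = u' k) -> (forall k, (k < N)%N -> v k = v' k) ->
  cov N u v = cov N u' v'.
Proof.
move=> eq_u eq_v; rewrite /cov.
by congr (_ * _ - _ * _); apply: eq_bigr => k _; rewrite ?eq_u ?eq_v.
Qed.

Lemma covC N u v : cov N u v = cov N v u.
Proof.
rewrite /cov [X in _ - X]mulrC; congr (_ * _ - _).
by apply: eq_bigr => k _; rewrite mulrC.
Qed.

Lemma covS N u v :
  cov N.+1 u v = cov N u v + \sum_(k < N) (u N - u k) * (v N - v k).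
Proof.
rewrite /cov !big_ord_recr /=.
under [X in _ = _ + X]eq_bigr => k _ do rewrite mulrBl !mulrBr.
rewrite !sumrB -!mulr_sumr -!mulr_suml sumr_const card_ord -mulr_natr.
rewrite -natr1; ring.
Qed.

Lemma cov_lagrange N u v :
  cov N u v = \sum_(l < N) \sum_(k < l) (u l - u k) * (v l - v k).
Proof.
elim: N => [|N IH]; first by rewrite /cov !big_ord0 mul0r subrr.
by rewrite covS IH [in RHS]big_ord_recr.
Qed.

Lemma cov_shift N a c u v :
  cov N (fun k => a + u k) (fun k => c + v k) = cov N u v.
Proof.
rewrite /cov.
under eq_bigr => k _ do rewrite mulrDl !mulrDr.
rewrite !big_split /= -!mulr_sumr -!mulr_suml !sumr_const card_ord.
rewrite -[a *+ N]mulr_natr -[c *+ N]mulr_natr; ring.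
Qed.

Lemma cov_suml N m (a : nat -> R) (w : nat -> nat -> R) v :
  cov N (fun k => \sum_(i < m) a i * w i k) v = \sum_(i < m) a i * cov N (w i) v.
Proof.
have sum_comb (F : nat -> nat -> R) :
    \sum_(k < N) \sum_(i < m) a i * F i k = \sum_(i < m) a i * \sum_(k < N) F i k.
  by rewrite exchange_big; apply: eq_bigr => i _; rewrite mulr_sumr.
have sum_combM : \sum_(k < N) (\sum_(i < m) a i * w i k) * v k
    = \sum_(i < m) a i * \sum_(k < N) w i k * v k.
  rewrite -(sum_comb (fun i k => w i k * v k)); apply: eq_bigr => k _.
  by rewrite mulr_suml; apply: eq_bigr => i _; rewrite mulrA.
rewrite /cov sum_combM sum_comb mulr_sumr mulr_suml -sumrB.
by apply: eq_bigr => i _; ring.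
Qed.

Lemma cov_sum_quad N m (b : nat -> R) (w : nat -> nat -> R) :
  cov N (fun k => \sum_(i < m) b i * w i k) (fun k => \sum_(i < m) b i * w i k)
  = \sum_(j < m) (\sum_(i < m) b i * cov N (w i) (w j)) * b j.
Proof.
rewrite cov_suml.
under eq_bigr => i _ do rewrite covC cov_suml mulr_sumr.
rewrite exchange_big /=; apply: eq_bigr => j _; rewrite mulr_suml.
by apply: eq_bigr => i _; rewrite covC; ring.
Qed.

End Covariance.

(* [(k - i)%N] is truncated, so [ramp R i] is the hinge [k |-> max(k - i, 0)]. *)
Definition ramp (R : nzSemiRingType) (i k : nat) : R := (k - i)%:R.

Lemma rampSr (R : nzSemiRingType) i k : ramp R i k.+1 = ramp R i k + (i <= k)%N%:R.
Proof.
rewrite /ramp; case: leqP => [le_ik | lt_ki]; first by rewrite subSn // -natr1.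
by rewrite (eqP lt_ki) (eqP (ltnW lt_ki)) addr0.
Qed.

Lemma sum_ramp (i N : nat) :
  \sum_(k < i + N) ramp rat i k = N%:R * (N%:R - 1) / 2.
Proof.
elim: N => [|N IH].
  rewrite addn0 big1 ?mul0r // => k _.
  by rewrite /ramp (eqP (ltnW (ltn_ord k))).
by rewrite addnS big_ord_recr /= IH /ramp addKn -natr1; field.
Qed.

Lemma sum_ramp_mul (j d N : nat) :
  \sum_(k < j + d + N) ramp rat (j + d) k * ramp rat j k
  = N%:R * (N%:R - 1) * (2 * N%:R - 1) / 6 + d%:R * N%:R * (N%:R - 1) / 2.
Proof.
elim: N => [|N IH].
  rewrite addn0 big1 ?mul0r ?mulr0 ?addr0 // => k _.
  by rewrite /ramp (eqP (ltnW (ltn_ord k))) mul0r.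
by rewrite addnS big_ord_recr /= IH /ramp addKn -addnA addKn natrD -natr1; field.
Qed.

Lemma cov_ramp_h_low (n i j : nat) :
  (j <= i <= n)%N -> cov n (ramp rat i) (ramp rat j) = h_low n i.+1 j.+1.
Proof.
case/andP=> /subnKC <- /subnKC <-.
set d := (i - j)%N; set N := (n - (j + d))%N.
by rewrite /cov sum_ramp_mul sum_ramp -addnA sum_ramp /h_low !natrD -!natr1; field.
Qed.

Lemma h_entry_cov_ramp n i j :
  (i < n.-1)%N -> (j < n.-1)%N ->
  h_entry n i.+1 j.+1 = cov n (ramp rat i) (ramp rat j).
Proof.
have le_n k : (k < n.-1)%N -> (k <= n)%N by move=> /leq_trans/(_ (leq_pred n))/ltnW.
move=> /le_n le_in /le_n le_jn.
rewrite /h_entry ltnS; case: (leqP j i) => [ji | /ltnW ij].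
  by rewrite cov_ramp_h_low // ji le_in.
by rewrite covC cov_ramp_h_low // ij le_jn.
Qed.

Lemma ratr_cov_ramp (F : numFieldType) n i j :
  ratr (cov n (ramp rat i) (ramp rat j)) = cov n (ramp F i) (ramp F j).
Proof.
rewrite /cov rmorphB !rmorphM !rmorph_sum rmorph_nat.
by congr (_ * _ - _ * _); apply: eq_bigr => k _; rewrite ?rmorphM /ramp !rmorph_nat.
Qed.

Lemma Hmx_quad_form (F : numFieldType) n (b : nat -> F) :
  ((Bvec n b)^T *m map_mx (fun q : rat => ratr q) (Hmx n) *m Bvec n b) 0 0
  = cov n (fun k => \sum_(i < n.-1) b i.+1 * ramp F i k)
          (fun k => \sum_(i < n.-1) b i.+1 * ramp F i k).
Proof.
rewrite (cov_sum_quad _ _ (fun i => b i.+1)) mxE; apply: eq_bigr => j _.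
rewrite !mxE; congr (_ * _); apply: eq_bigr => i _.
by rewrite !mxE h_entry_cov_ramp // ratr_cov_ramp.
Qed.

Lemma Hmx_pos_natr n (i j : 'I_n.-1) :
  exists k : nat, (0 < k)%N /\ Hmx n i j = k%:R.
Proof.
case: n => [|[|m]] in i j *; try by case: i.
set t := fun l k : nat => (((l - i) - (k - i)) * ((l - j) - (k - j)))%N.
exists (\sum_(l < m.+2) \sum_(k < l) t l k)%N; split.
  have unit_step (k : 'I_m.+1) : (m.+1 - k - (m - k) = 1)%N by have := ltn_ord k; lia.
  have last_term : t m.+1 m = 1%N by rewrite /t !unit_step.
  rewrite big_ord_recr /= [X in (_ + X)%N]big_ord_recr /= last_term; lia.
rewrite mxE h_entry_cov_ramp // cov_lagrange natr_sum; apply: eq_bigr => l _.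
rewrite natr_sum; apply: eq_bigr => k _.
have mono a : (k - a <= l - a)%N by rewrite leq_sub2r // ltnW.
by rewrite /t natrM (natrB _ (mono i)) (natrB _ (mono j)).
Qed.

Lemma roots_ramp_expansion (R : comNzRingType) n (x b : nat -> R) :
  (forall k, (2 <= k <= n)%N -> x k = x k.-1 + \sum_(1 <= j < k) b j) ->
  forall k, (k < n)%N -> x k.+1 = x 1%N + \sum_(i < n.-1) b i.+1 * ramp R i k.
Proof.
move=> hb; elim=> [|k IH] lt_kn.
  by rewrite big1 ?addr0 // => i _; rewrite /ramp sub0n mulr0.
have le_kn : (k.+1 <= n.-1)%N by rewrite -ltnS prednK // (leq_ltn_trans _ lt_kn).
rewrite hb; last exact: lt_kn.
rewrite IH ?(ltnW lt_kn) // -addrA; congr (_ + _).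
under [RHS]eq_bigr => i _ do rewrite rampSr mulrDr.
rewrite big_split /=; congr (_ + _).
rewrite big_add1 big_mkord /= (big_ord_widen n.-1 (fun i => b i.+1) le_kn) big_mkcond.
by apply: eq_bigr => i _; rewrite ltnS; case: leqP; rewrite ?mulr1 ?mulr0.
Qed.

Section ProdXaddC.
Variables (R : comNzRingType) (y : nat -> R).
Local Notation P m := (\prod_(k < m) ('X + (y k)%:P)).

Lemma coef_prod_XaddC_recr m j : (P m.+1)`_j.+1 = (P m)`_j + y m * (P m)`_j.+1.
Proof.
have -> : P m.+1 = P m * ('X + (y m)%:P) by rewrite big_ord_recr.
by rewrite mulrDr coefD coefMX coefMC mulrC.
Qed.

Lemma coef_prod_XaddC_lead m : (P m)`_m = 1.
Proof.
have -> : P m = \prod_(k < m) ('X - (- y k)%:P).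
  by apply: eq_bigr => k _; rewrite polyCN opprK.
have /monicP <- := monic_prod_XsubC (index_enum 'I_m) xpredT (fun k => - y k).
by rewrite /lead_coef size_prod_XsubC /index_enum -enumT size_enum_ord.
Qed.

Lemma coef_prod_XaddC_e1 m : (P m.+1)`_m = \sum_(k < m.+1) y k.
Proof.
elim: m => [|m IH].
  by rewrite !big_ord1 coefD coefX coefC add0r.
by rewrite coef_prod_XaddC_recr IH coef_prod_XaddC_lead mulr1 [RHS]big_ord_recr.
Qed.

Lemma coef_prod_XaddC_e2 m :
  2 * (P m.+2)`_m = (\sum_(k < m.+2) y k) ^+ 2 - \sum_(k < m.+2) y k ^+ 2.
Proof.
elim: m => [|m IH].
  rewrite !big_ord_recr !big_ord0 /= mul1r mulrDr coefD coefMX coefMC.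
  by rewrite coefD coefX coefC /= add0r add0r; ring.
rewrite coef_prod_XaddC_recr mulrDr IH coef_prod_XaddC_e1.
by rewrite [in RHS]big_ord_recr [in RHS](big_ord_recr m.+2) /=; ring.
Qed.

End ProdXaddC.

Lemma char_discriminantE (R : comNzRingType) m (a2 a1 a0 S Q : R) :
  a1 = a2 * S -> 2 * a0 = a2 * (S ^+ 2 - Q) ->
  (m.+1)`!%:R ^+ 2 * a1 ^+ 2 - 2 * (m.+2)`!%:R * m`!%:R * a2 * a0
  = (m.+1)`!%:R * m`!%:R * a2 ^+ 2 * (m.+2%:R * Q - S ^+ 2).
Proof.
move=> -> e2.
have -> : 2 * (m.+2)`!%:R * m`!%:R * a2 * a0 = (m.+2)`!%:R * m`!%:R * a2 * (2 * a0).
  by ring.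
by rewrite e2 !factS !natrM; ring.
Qed.

Theorem mainTheorem1 (R : realType) (n : nat) (hn : (2 <= n)%N)
    (f : {poly R[i]}) (hf : size f = n.+1)
    (x : nat -> R[i]) (b : nat -> R[i])
    (hfact : f = f`_n *: \prod_(1 <= k < n.+1) ('X + (x k)%:P))
    (hb : forall k, (2 <= k <= n)%N -> x k = x k.-1 + \sum_(1 <= j < k) b j) :
  let D := ((n.-1)`!)%:R ^+ 2 * f`_n.-1 ^+ 2
           - 2 * (n`!)%:R * ((n.-2)`!)%:R * f`_n * f`_n.-2 in
  (D%:M : 'M[R[i]]_1)
    = ((n.-1)`!)%:R * ((n.-2)`!)%:R * f`_n ^+ 2
        *: ((Bvec n b)^T *m map_mx (fun q : rat => ratr q) (Hmx n) *m Bvec n b)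
  /\ (forall i j : 'I_n.-1, exists k : nat, (0 < k)%N /\ Hmx n i j = k%:R).
Proof.
move=> D; split; last exact: Hmx_pos_natr.
case: n hn hf @D hfact hb => [|[|m]] // _ _ D hfact hb.
have {}hfact : f = f`_m.+2 *: \prod_(k < m.+2) ('X + (x k.+1)%:P).
  by rewrite {1}hfact big_add1 big_mkord.
set S := \sum_(k < m.+2) x k.+1; set Q := \sum_(k < m.+2) x k.+1 ^+ 2.
have quad :
    ((Bvec m.+2 b)^T *m map_mx (fun q : rat => ratr q) (Hmx m.+2) *m Bvec m.+2 b) 0 0
    = m.+2%:R * Q - S ^+ 2.
  have shift k : (k < m.+2)%N ->
      x 1%N + \sum_(i < m.+1) b i.+1 * ramp _ i k = x k.+1.
    by move=> lt_k; rewrite (roots_ramp_expansion hb lt_k).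
  rewrite (@Hmx_quad_form _ m.+2 b) -(cov_shift _ (x 1%N) (x 1%N)).
  by rewrite (eq_cov shift shift) /cov /S /Q.
apply/matrixP => p q; rewrite !ord1 mxE eqxx mulr1n [RHS]mxE quad /D /=.
apply: char_discriminantE; rewrite {1}hfact coefZ.
  by rewrite (coef_prod_XaddC_e1 (fun k => x k.+1)).
by rewrite mulrCA (coef_prod_XaddC_e2 (fun k => x k.+1)).
Qed.
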